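(* For any residuated semigroup $\mathbf A$ the following are equivalent: (1) $\mathbf A$ is balanced; (2) $\mathbf A$ satisfies $x\backslash x= x/x$, $y\le (x/x)y$ and $y\le y(x\backslash x)$ for all $x,y$; (3) $\mathbf A$ satisfies $(x\backslash x)y=y(x\backslash x)$ and $y\le y(x\backslash x)$ for all $x,y$; (4) $\mathbf A$ satisfies $(x/x)y=y(x/x)$ and $y\le (x/x)y$ for all $x,y$.
   Context: A residuated semigroup is a structure $\langle A,\le,\cdot,\backslash,/\rangle$ where $\langle A,\le\rangle$ is a poset, $\langle A,\cdot\rangle$ is a semigroup (we write $xy$ for $x\cdot y$), and for all $x,y,z$: $xy\le z\iff x\le z/y\iff y\le x\backslash z$. An element $p$ is positive if $a\le pa$ and $a\le ap$ for all $a\in A$. Self-residuals are elements of the form $a\backslash a$ or $a/a$. A residuated semigroup is balanced if it satisfies $x\backslash x=x/x$ for all $x$ and all its self-residuals are positive. *)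

Record residuated_semigroup (A : Type) (le : A -> A -> Prop)
    (mul ldiv rdiv : A -> A -> A) : Prop := {
  rs_refl : forall x, le x x;
  rs_antisym : forall x y, le x y -> le y x -> x = y;
  rs_trans : forall x y z, le x y -> le y z -> le x z;
  rs_assoc : forall x y z, mul (mul x y) z = mul x (mul y z);
  (* xy <= z  <->  x <= z/y  <->  y <= x\z ;  ldiv x z = x\z, rdiv z y = z/y *)
  rs_res_r : forall x y z, le (mul x y) z <-> le x (rdiv z y);
  rs_res_l : forall x y z, le (mul x y) z <-> le y (ldiv x z)
}.

Definition positive {A : Type} (le : A -> A -> Prop) (mul : A -> A -> A)
    (p : A) : Prop :=
  forall a, le a (mul p a) /\ le a (mul a p).

Definition self_residual {A : Type} (ldiv rdiv : A -> A -> A) (p : A) : Prop :=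
  exists a, p = ldiv a a \/ p = rdiv a a.

Definition balanced {A : Type} (le : A -> A -> Prop)
    (mul ldiv rdiv : A -> A -> A) : Prop :=
  (forall x, ldiv x x = rdiv x x) /\
  (forall p, self_residual ldiv rdiv p -> positive le mul p).

(* A self-residual e is an idempotent-like element: e e <= e.  Once e is positive
   and x\x = x/x, residuation shows that z e <= z and e z <= z are equivalent,
   and sandwiching e y and y e between (e y) e and e (y e) makes e central.
   Conversely, if every x\x is central and right-positive, then x\x is positive,
   x\x <= x/x, and x/x is positive, so (x/x) x = x; the reverse inequality
   x/x <= x\x comes from x (x/x) <= x g = g x = g (x/x) x = (x/x) g x <= (x/x) x = x,
   where g = (x/x)\(x/x) is central.  Condition (4) is condition (3) for the opposite
   residuated semigroup, whose left and right residuals are swapped. *)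


Section Residuated.

Context {A : Type} {le : A -> A -> Prop} {mul ldiv rdiv : A -> A -> A}.
Hypothesis HA : residuated_semigroup A le mul ldiv rdiv.

Local Infix "≤" := le (at level 70).
Local Infix "⋅" := mul (at level 40, left associativity).

Let le_refl x : x ≤ x := rs_refl _ _ _ _ _ HA x.
Let le_trans y x z : x ≤ y -> y ≤ z -> x ≤ z := rs_trans _ _ _ _ _ HA x y z.
Let le_antisym x y : x ≤ y -> y ≤ x -> x = y := rs_antisym _ _ _ _ _ HA x y.
Let mulA x y z : x ⋅ y ⋅ z = x ⋅ (y ⋅ z) := rs_assoc _ _ _ _ _ HA x y z.
Let le_rdiv x y z : x ⋅ y ≤ z <-> x ≤ rdiv z y := rs_res_r _ _ _ _ _ HA x y z.
Let le_ldiv x y z : x ⋅ y ≤ z <-> y ≤ ldiv x z := rs_res_l _ _ _ _ _ HA x y z.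

Lemma le_mul2l x a b : a ≤ b -> x ⋅ a ≤ x ⋅ b.
Proof. intro Hab; apply le_ldiv, (le_trans b); [exact Hab | apply le_ldiv, le_refl]. Qed.

Lemma le_mul2r x a b : a ≤ b -> a ⋅ x ≤ b ⋅ x.
Proof. intro Hab; apply le_rdiv, (le_trans b); [exact Hab | apply le_rdiv, le_refl]. Qed.

Lemma mul_ldiv_le x z : x ⋅ ldiv x z ≤ z.
Proof. apply le_ldiv, le_refl. Qed.

Lemma rdiv_mul_le z y : rdiv z y ⋅ y ≤ z.
Proof. apply le_rdiv, le_refl. Qed.

Lemma ldiv_self_mul_le x : ldiv x x ⋅ ldiv x x ≤ ldiv x x.
Proof.
  apply (proj1 (le_ldiv x _ x)); rewrite <- mulA.
  apply (le_trans (x ⋅ ldiv x x)); [apply le_mul2r |]; apply mul_ldiv_le.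
Qed.

Lemma rdiv_self_mul_le x : rdiv x x ⋅ rdiv x x ≤ rdiv x x.
Proof.
  apply (proj1 (le_rdiv _ x x)); rewrite mulA.
  apply (le_trans (rdiv x x ⋅ x)); [apply le_mul2l |]; apply rdiv_mul_le.
Qed.

Lemma positive_le p q : positive le mul p -> p ≤ q -> positive le mul q.
Proof.
  intros Hp Hpq a; split.
  - apply (le_trans (p ⋅ a)); [apply Hp | apply le_mul2r, Hpq].
  - apply (le_trans (a ⋅ p)); [apply Hp | apply le_mul2l, Hpq].
Qed.

Lemma positive_mul_id p x : positive le mul p -> p ⋅ x ≤ x -> p ⋅ x = x.
Proof. intros Hp Hpx; apply le_antisym; [exact Hpx | apply Hp]. Qed.

Lemma comm_positive_self_mul_le e :
  positive le mul e -> e ⋅ e ≤ e ->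
  (forall z, z ⋅ e ≤ z <-> e ⋅ z ≤ z) ->
  forall y, e ⋅ y = y ⋅ e.
Proof.
  intros He Hee Hsym y; apply le_antisym.
  - apply (le_trans (e ⋅ y ⋅ e)); [apply He |].
    rewrite mulA; apply Hsym; rewrite mulA; apply le_mul2l, Hee.
  - apply (le_trans (e ⋅ (y ⋅ e))); [apply He |].
    rewrite <- mulA; apply Hsym; rewrite <- mulA; apply le_mul2r, Hee.
Qed.

Lemma balanced_ldiv_positive x :
  balanced le mul ldiv rdiv -> positive le mul (ldiv x x).
Proof. intros [_ Hpos]; apply Hpos; exists x; left; reflexivity. Qed.

Lemma balanced_rdiv_positive x :
  balanced le mul ldiv rdiv -> positive le mul (rdiv x x).
Proof. intros [_ Hpos]; apply Hpos; exists x; right; reflexivity. Qed.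

Lemma balanced_ldiv_comm x y :
  balanced le mul ldiv rdiv -> ldiv x x ⋅ y = y ⋅ ldiv x x.
Proof.
  intro Hb; apply comm_positive_self_mul_le.
  - apply balanced_ldiv_positive, Hb.
  - apply ldiv_self_mul_le.
  - destruct Hb as [Hself _]; intro z; split; intro Hz.
    + apply le_rdiv; rewrite <- (Hself z); apply le_ldiv, Hz.
    + apply le_ldiv; rewrite (Hself z); apply le_rdiv, Hz.
Qed.

Lemma rdiv_self_le_ldiv_self x :
  (forall u y, ldiv u u ⋅ y = y ⋅ ldiv u u) ->
  positive le mul (rdiv x x) -> rdiv x x ≤ ldiv x x.
Proof.
  intros Hcomm Hpos; set (f := rdiv x x).
  assert (Hfx : f ⋅ x = x) by (apply positive_mul_id; [exact Hpos | apply rdiv_mul_le]).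
  assert (Hg : ldiv f f ⋅ x = f ⋅ ldiv f f ⋅ x)
    by (rewrite <- (Hcomm f f), mulA, Hfx; reflexivity).
  apply le_ldiv, (le_trans (x ⋅ ldiv f f)).
  - apply le_mul2l, le_ldiv, rdiv_self_mul_le.
  - rewrite <- (Hcomm f x), Hg.
    apply (le_trans (f ⋅ x)); [apply le_mul2r, mul_ldiv_le | rewrite Hfx; apply le_refl].
Qed.

Lemma comm_positive_ldiv_balanced :
  (forall x y, ldiv x x ⋅ y = y ⋅ ldiv x x /\ y ≤ y ⋅ ldiv x x) ->
  balanced le mul ldiv rdiv.
Proof.
  intro H.
  assert (Hpos_l : forall x, positive le mul (ldiv x x)).
  { intros x a; destruct (H x a) as [Ha Hle]; rewrite Ha; split; exact Hle. }
  assert (ldiv_le_rdiv : forall x, ldiv x x ≤ rdiv x x).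
  { intro x; apply le_rdiv; rewrite (proj1 (H x x)); apply mul_ldiv_le. }
  assert (Hpos_r : forall x, positive le mul (rdiv x x)).
  { intro x; exact (positive_le _ _ (Hpos_l x) (ldiv_le_rdiv x)). }
  split.
  - intro x; apply le_antisym; [apply ldiv_le_rdiv |].
    apply rdiv_self_le_ldiv_self; [intros; apply H | apply Hpos_r].
  - intros p [x [-> | ->]]; [apply Hpos_l | apply Hpos_r].
Qed.

End Residuated.

Lemma residuated_semigroup_op A le (mul ldiv rdiv : A -> A -> A) :
  residuated_semigroup A le mul ldiv rdiv ->
  residuated_semigroup A le (fun x y => mul y x)
    (fun x z => rdiv z x) (fun z y => ldiv y z).
Proof.
  intros [Hrefl Hantisym Htrans Hassoc Hres_r Hres_l]; split; try assumption.
  - intros x y z; symmetry; apply Hassoc.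
  - intros x y z; apply Hres_l.
  - intros x y z; apply Hres_r.
Qed.

Lemma balanced_op A le (mul ldiv rdiv : A -> A -> A) :
  balanced le mul ldiv rdiv ->
  balanced le (fun x y => mul y x) (fun x z => rdiv z x) (fun z y => ldiv y z).
Proof.
  intros [Hself Hpos]; split.
  - intro x; symmetry; apply Hself.
  - intros p [x Hp] a; destruct (Hpos p) with (a := a) as [Hl Hr].
    + exists x; tauto.
    + split; assumption.
Qed.

Theorem proposition3p2 (A : Type) (le : A -> A -> Prop)
    (mul ldiv rdiv : A -> A -> A)
    (HA : residuated_semigroup A le mul ldiv rdiv) :
  (balanced le mul ldiv rdiv <->
     (forall x y, ldiv x x = rdiv x x /\ le y (mul (rdiv x x) y)
                  /\ le y (mul y (ldiv x x)))) /\
  (balanced le mul ldiv rdiv <->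
     (forall x y, mul (ldiv x x) y = mul y (ldiv x x)
                  /\ le y (mul y (ldiv x x)))) /\
  (balanced le mul ldiv rdiv <->
     (forall x y, mul (rdiv x x) y = mul y (rdiv x x)
                  /\ le y (mul (rdiv x x) y))).
Proof.
  split; [| split]; split.
  - intros Hb x y; split; [apply Hb |].
    split; [apply (balanced_rdiv_positive x Hb) | apply (balanced_ldiv_positive x Hb)].
  - intro H; split; [intro x; apply (H x x) |].
    intros p [x [-> | ->]] y; destruct (H x y) as [Hself [Hr Hl]];
      rewrite Hself in *; split; assumption.
  - intros Hb x y; split; [apply (balanced_ldiv_comm HA), Hb | apply (balanced_ldiv_positive x Hb)].
  - apply (comm_positive_ldiv_balanced HA).
  - intros Hb x y; rewrite <- (proj1 Hb x).
    split; [apply (balanced_ldiv_comm HA), Hb | apply (balanced_ldiv_positive x Hb)].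
  - intro H; apply (balanced_op A le (fun x y => mul y x)
                      (fun x z => rdiv z x) (fun z y => ldiv y z)).
    apply (comm_positive_ldiv_balanced (residuated_semigroup_op _ _ _ _ _ HA)).
    intros x y; destruct (H x y) as [Hc Hle]; split; [symmetry; exact Hc | exact Hle].
Qed.
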